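(* Let $\nu:\mathcal{P}(\mathbf{N})\to\mathbf{R}$ be an abstract upper density and let $\mathcal{Z}_\nu=\{A\subseteq\mathbf{N}:\nu(A)=0\}$. Then there exists a normalized capacity $\rho:\mathscr{B}(\mathrm{Ult}(\mathcal{Z}_\nu))\to\mathbf{R}$ such that for every $A\subseteq\mathbf{N}$, $$\nu(A)=\int_{\mathrm{Ult}(\mathcal{Z}_\nu)}\mu_{\mathcal{F}}(A)\,\mathrm{d}\rho(\mathcal{F}).$$
   Context: An abstract upper density is a set function $\nu:\mathcal{P}(\mathbf{N})\to\mathbf{R}$ that is a normalized capacity (monotone, $\nu(\emptyset)=0$, $\nu(\mathbf{N})=1$), diffuse ($\nu(A)=0$ for every finite $A$), and subadditive ($\nu(A\cup B)\le\nu(A)+\nu(B)$). For an ideal $\mathcal{I}$ on $\mathbf{N}$ (closed under subsets and finite unions, not containing $\mathbf{N}$, containing all finite sets) with dual filter $\mathcal{I}^\star=\{A:\mathbf{N}\setminus A\in\mathcal{I}\}$: $\mathrm{Ult}(\mathcal{I})$ is the set of ultrafilters $\mathcal{F}$ on $\mathbf{N}$ with $\mathcal{I}^\star\subseteq\mathcal{F}$, with the topology induced from the Stone–Čech space $\beta\mathbf{N}$ (basic clopen sets $\{\mathcal{F}:A\in\mathcal{F}\}$), $\mathscr{B}$ is the Borel $\sigma$-algebra, and $\mu_{\mathcal{F}}(A)=1$ if $A\in\mathcal{F}$ and $0$ otherwise. A normalized capacity on a $\sigma$-algebra is a monotone set function with value $0$ at $\emptyset$ and $1$ at the whole space. The Choquet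 integral of a bounded function $f$ with respect to a normalized capacity $\rho$ on $S$ is $\int_0^\infty\rho(f\ge t)\,\mathrm{d}t+\int_{-\infty}^0[\rho(f\ge t)-1]\,\mathrm{d}t$. *)

From HB Require Import structures.
From mathcomp Require Import all_boot all_order all_algebra.
From mathcomp Require Import all_classical all_reals all_analysis.
Set Implicit Arguments. Unset Strict Implicit. Unset Printing Implicit Defensive.
Import Order.TTheory GRing.Theory Num.Theory.
Local Open Scope classical_set_scope.
Local Open Scope ring_scope.

Definition abstract_upper_density {R : realType} (nu : set nat -> R) : Prop :=
  [/\ (forall A B : set nat, A `<=` B -> nu A <= nu B),
      nu set0 = 0, nu setT = 1,
      (forall A : set nat, finite_set A -> nu A = 0) &
      (forall A B : set nat, nu (A `|` B) <= nu A + nu B)].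

Definition zero_ideal {R : realType} (nu : set nat -> R) : set (set nat) :=
  [set A | nu A = 0].

Definition dual_filter (I : set (set nat)) : set (set nat) :=
  [set A | I (~` A)].

Definition is_ultrafilter (F : set (set nat)) : Prop :=
  [/\ F setT, ~ F set0,
      (forall A B, A `<=` B -> F A -> F B),
      (forall A B, F A -> F B -> F (A `&` B)) &
      (forall A, F A \/ F (~` A))].

Definition Ult (I : set (set nat)) : set (set (set nat)) :=
  [set F | is_ultrafilter F /\ dual_filter I `<=` F].

Definition ult_basic (I : set (set nat)) (A : set nat) : set (set (set nat)) :=
  [set F | Ult I F /\ F A].

(** Open sets of Ult(I) for the topology induced from beta N. *)
Definition ult_open (I : set (set nat)) (U : set (set (set nat))) : Prop :=
  U `<=` Ult I /\
  forall F, U F -> exists A : set nat, F A /\ ult_basic I A `<=` U.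

Definition ult_borel (I : set (set nat)) : set (set (set (set nat))) :=
  <<s Ult I, ult_open I >>.

Definition normalized_capacity {R : realType} {T : Type} (S : set T)
  (Sigma : set (set T)) (rho : set T -> R) : Prop :=
  [/\ rho set0 = 0, rho S = 1 &
      (forall A B, Sigma A -> Sigma B -> A `<=` B -> rho A <= rho B)].

Definition mu_uf {R : realType} (F : set (set nat)) (A : set nat) : R :=
  if `[< F A >] then 1 else 0.

Definition choquet {R : realType} {T : Type} (S : set T) (rho : set T -> R)
  (f : T -> R) : R :=
  (fine (\int[@lebesgue_measure R]_(t in `[0, +oo[%classic)
            (rho [set x | S x /\ t <= f x])%:E)
   + fine (\int[@lebesgue_measure R]_(t in `]-oo, 0[%classic)
            (rho [set x | S x /\ t <= f x] - 1)%:E))%R.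

From HB Require Import structures.
From mathcomp Require Import all_boot all_order all_algebra.
From mathcomp Require Import all_classical all_reals all_analysis.
From mathcomp Require Import measurable_realfun.
Import Order.TTheory GRing.Theory Num.Theory.
Local Open Scope classical_set_scope.
Local Open Scope ring_scope.

(* Take for rho the outer capacity rho(U) = inf { nu B : U is covered by the
   basic clopen set of B }.  A set A of positive density modulo nu-null sets
   lies in some ultrafilter of Ult(Z_nu), so the basic clopen sets are ordered
   like the densities of their defining sets, and rho agrees with nu on them.
   The Choquet integral of the {0,1}-valued map F |-> mu_F(A) is the capacity
   of its level set {F : A in F}, the basic clopen set of A. *)

Section choquet_indicator.
Variables (R : realType) (T : Type) (S P : set T) (rho : set T -> R).
Hypotheses (rho0 : rho set0 = 0) (rhoS : rho S = 1).
Hypothesis rhoSP_ge0 : 0 <= rho (S `&` P).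

Let f (x : T) : R := if `[< P x >] then 1 else 0.
Let level (t : R) := [set x | S x /\ t <= f x].

Let f01 x : (P x /\ f x = 1) \/ (~ P x /\ f x = 0).
Proof. by rewrite /f; case: asboolP; [left|right]. Qed.

Let level_lt0 t : t < 0 -> level t = S.
Proof.
move=> t_lt0; apply/seteqP; split=> x; first by case.
by move=> Sx; split=> //; case: (f01 x) => -[_ ->]; apply: ltW;
  [apply: lt_trans t_lt0 _|].
Qed.

Let level_itv01 t : 0 < t -> t <= 1 -> level t = S `&` P.
Proof.
move=> t_gt0 t_le1; apply/seteqP; split=> x [Sx].
  by case: (f01 x) => -[Px ->]; rewrite ?leNgt ?t_gt0.
by move=> Px; split=> //; case: (f01 x) => -[// _ ->].
Qed.

Let level_gt1 t : 1 < t -> level t = set0.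
Proof.
move=> t_gt1; apply/seteqP; split=> x // [_].
case: (f01 x) => -[_ ->]; rewrite leNgt ?t_gt1 //.
by rewrite (lt_trans ltr01 t_gt1).
Qed.

Lemma choquet_indicator : choquet S rho f = rho (S `&` P).
Proof.
rewrite /choquet -/level.
rewrite [X in _ + fine X](_ : _ = 0%E); last first.
  apply: integral0_eq => t; rewrite /= in_itv /= => /level_lt0.
  by rewrite /level => ->; rewrite rhoS subrr.
rewrite addr0.
have level_step : {in `]0, +oo[%classic, (fun t => (rho (level t))%:E) =1
    (fun t => (rho (S `&` P) * \1_(`]0, 1]%classic : set R) t)%:E)}.
  move=> t; rewrite inE /= in_itv /= andbT => t_gt0; rewrite indicE.
  have [t_le1|t_gt1] := leP t 1.
    by rewrite level_itv01 // mem_set ?mulr1 //= in_itv /= t_gt0.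
  by rewrite level_gt1 // rho0 memNset ?mulr0 //= in_itv /= t_gt0 leNgt t_gt1.
have mlevel : measurable_fun (`]0, +oo[%classic : set R)
    (fun t => (rho (level t))%:E).
  apply: (measurable_fun_eqP _ level_step).2; apply/measurable_EFinP.
  by apply: measurable_funM => //; apply: measurable_indic.
rewrite -(@integral_setD1 _ _ 0) ?setDitv1l //.
under eq_integral => t t_gt0 do rewrite -/(level t) (level_step t t_gt0).
rewrite (integralZl_indic (m := lebesgue_measure) _
  (fun=> (`]0, 1]%classic : set R))) //; last first.
  by move=> /lt_le_trans /(_ rhoSP_ge0); rewrite ltxx.
have integral_indic01 : (\int[lebesgue_measure]_(t in `]0%R, +oo[%classic)
    (\1_(`]0%R, 1%R]%classic : set R) t)%:E =
    lebesgue_measure (`]0%R, 1%R]%classic `&` `]0%R, +oo[%classic : set R))%E.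
  exact: integral_indic.
rewrite integral_indic01 (@setIidl _ `]0%R, 1%R]%classic); last first.
  by move=> x /=; rewrite !in_itv /= => /andP[->].
by rewrite lebesgue_measure_itv /= lte01 oppr0 adde0 mule1.
Qed.

End choquet_indicator.

Lemma ultraFilter_is_ultrafilter (F : set (set nat)) :
  UltraFilter F -> is_ultrafilter F.
Proof.
move=> Fultra; have Fproper : ProperFilter F by exact: ultra_proper.
split.
- exact: filterT.
- exact: filter_not_empty.
- by move=> A B AB; apply: filterS.
- by move=> A B; apply: filterI.
- by move=> A; apply: in_ultra_setVsetC.
Qed.

Section upper_density.
Variables (R : realType) (nu : set nat -> R).
Hypothesis nu_density : abstract_upper_density nu.

Let Z := zero_ideal nu.

Lemma density0 : nu set0 = 0.
Proof. by case: nu_density. Qed.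

Lemma densityT : nu setT = 1.
Proof. by case: nu_density. Qed.

Lemma le_density {A B} : A `<=` B -> nu A <= nu B.
Proof. by case: nu_density => mon _ _ _ _; apply: mon. Qed.

Lemma density_ge0 A : 0 <= nu A.
Proof. by rewrite -density0; apply: le_density. Qed.

Lemma density_setU A B : nu (A `|` B) <= nu A + nu B.
Proof. by case: nu_density => _ _ _ _; apply. Qed.

Lemma null_setU A B : nu A = 0 -> nu B = 0 -> nu (A `|` B) = 0.
Proof.
move=> A0 B0; apply/eqP; rewrite eq_le density_ge0 andbT.
by rewrite -[0]addr0 -{1}A0 -B0 density_setU.
Qed.

(* The filter generated by C and the dual filter of Z. *)
Definition trace_filter (C : set nat) : set (set nat) :=
  [set B | exists2 D, nu D = 0 & C `&` ~` D `<=` B].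

Lemma trace_filter_proper C : nu C != 0 -> ProperFilter (trace_filter C).
Proof.
move=> C_neq0; apply: Build_ProperFilter_ex.
  move=> B [D D0 sB]; apply: contrapT => B_empty.
  suff CD : nu C <= nu D by move: C_neq0; rewrite eq_le density_ge0 andbT -D0 CD.
  apply: le_density => n Cn; apply: contrapT => Dn; apply: B_empty.
  by exists n; apply: sB.
split.
- by exists set0; [exact: density0|].
- move=> B1 B2 [D1 D10 s1] [D2 D20 s2]; exists (D1 `|` D2).
    exact: null_setU.
  by move=> n [Cn /not_orP[nD1 nD2]]; split; [apply: s1|apply: s2].
- by move=> B1 B2 B12 [D D0 sB1]; exists D => //; apply: subset_trans B12.
Qed.

Lemma density_neq0_ult {C} : nu C != 0 -> exists F, Ult Z F /\ F C.
Proof.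
move=> /trace_filter_proper /ultraFilterLemma [F [Fultra sub_F]].
exists F; split; last by apply: sub_F; exists set0; [exact: density0|move=> n []].
split; first exact: ultraFilter_is_ultrafilter.
by move=> B ZCB; apply: sub_F; exists (~` B) => // n [_]; rewrite setCK.
Qed.

(* If [A] minus [B] had positive density, an ultrafilter through it would be
   in the basic set of [A] but not of [B]. *)
Lemma ult_basic_density_le A B :
  ult_basic Z A `<=` ult_basic Z B -> nu A <= nu B.
Proof.
move=> sAB; have [/eqP AB0|AB_neq0] := boolP (nu (A `&` ~` B) == 0).
  have A_sub : A `<=` (A `&` ~` B) `|` B.
    by move=> n An; have [|] := pselect (B n); [right|left].
  apply: le_trans (le_density A_sub) _.
  by apply: le_trans (density_setU _ _) _; rewrite AB0 add0r.
have [F [UF FAB]] := density_neq0_ult AB_neq0.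
have [[_ F0 FS FI _] _] := UF.
have [_ FB] := sAB F (conj UF (FS _ _ (@subIsetl _ _ _) FAB)).
by exfalso; apply: F0; apply: FS (FI _ _ FAB FB) => n [[_ ?] ?].
Qed.

Lemma ult_basicT : ult_basic Z setT = Ult Z.
Proof.
by apply/seteqP; split=> [F []//|F UF]; split=> //; case: UF => -[].
Qed.

Definition outer_capacity (U : set (set (set nat))) : R :=
  inf [set nu B | B in [set B | U `&` Ult Z `<=` ult_basic Z B]].

Lemma outer_capacity_le U B : U `&` Ult Z `<=` ult_basic Z B ->
  outer_capacity U <= nu B.
Proof.
move=> UB; apply: ge_inf; last by exists B.
by exists 0 => _ [C _ <-]; apply: density_ge0.
Qed.

Lemma outer_capacity_ge U c :
  (forall B, U `&` Ult Z `<=` ult_basic Z B -> c <= nu B) ->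
  c <= outer_capacity U.
Proof.
move=> c_lb; apply: lb_le_inf; last by move=> _ [B UB <-]; apply: c_lb.
by exists (nu setT), setT => // F [_ [[]]].
Qed.

Lemma outer_capacity_basic A : outer_capacity (ult_basic Z A) = nu A.
Proof.
apply/eqP; rewrite eq_le outer_capacity_le ?andTb => [|F []//].
apply: outer_capacity_ge => B AB; apply: ult_basic_density_le => F [UF FA].
by apply: AB; split.
Qed.

Lemma le_outer_capacity U V : U `<=` V -> outer_capacity U <= outer_capacity V.
Proof.
move=> UV; apply: outer_capacity_ge => B VB; apply: outer_capacity_le.
by apply: subset_trans VB; apply: setSI.
Qed.

Lemma outer_capacity0 : outer_capacity set0 = 0.
Proof.
apply/eqP; rewrite eq_le -{1}density0 outer_capacity_le ?andTb => [|F []//].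
by apply: outer_capacity_ge => B _; apply: density_ge0.
Qed.

Lemma outer_capacityT : outer_capacity (Ult Z) = 1.
Proof. by rewrite -ult_basicT outer_capacity_basic densityT. Qed.

End upper_density.

Theorem corollary1p2 (R : realType) (nu : set nat -> R) :
  abstract_upper_density nu ->
  exists rho : set (set (set nat)) -> R,
    normalized_capacity (Ult (zero_ideal nu)) (ult_borel (zero_ideal nu)) rho /\
    forall A : set nat,
      nu A = choquet (Ult (zero_ideal nu)) rho (fun F => mu_uf F A).
Proof.
move=> nu_density; exists (@outer_capacity R nu); split.
  split; [exact: outer_capacity0|exact: outer_capacityT|].
  by move=> U V _ _; apply: le_outer_capacity.
move=> A; rewrite /mu_uf choquet_indicator.
- by rewrite outer_capacity_basic.
- exact: outer_capacity0.
- exact: outer_capacityT.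
- by rewrite outer_capacity_basic // density_ge0.
Qed.
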